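(* Let $G=(V,E,\omega)$ have all its edge weights in a unital subring $\mathbb{U}\subseteq\mathbb{W}$, let $S=\{v_1,\dots,v_m\}\in st_0(G)$, and suppose each vertex of $G$ lies on a branch in $\mathcal{B}_S(G)$ (so that $\mathcal{L}_S(G)$ is defined). Then $G$ and $\mathcal{L}_S(G)$ are spectrally equivalent and have the same nonzero spectrum. Moreover, if $|G|>m+\sum_{j=1}^m(|\beta^j|-2)$ then $\mathcal{L}_S(G)$ is a reduction of $G$ over $\mathbb{U}$; otherwise it is an expansion of $G$ over $\mathbb{U}$.
   Context: Let $\mathbb{W}$ be the field of rational functions in a complex variable $\lambda$ with complex coefficients; a unital subring is a subring containing $1$. A graph $G=(V,E,\omega)$ is a finite directed graph with vertex set $V$, edges $E$ (loops allowed, at most one edge from a vertex to another), weights $\omega:E\to\mathbb{W}\setminus\{0\}$ (weight $0$ for non-edges); $M(G)_{ij}=\omega(e_{ij})$; $|G|$ = number of vertices; the weight set is $\omega(E)$. The spectrum $\sigma(G)$ is the list of roots, with multiplicity, of the numerator of $\det(M(G)-\lambda I)$ written in lowest terms; ''nonzero spectrum'' means this list with all zeros removed. $\bar S=V\setminus S$; $\ell(G)$ is $G$ without loops. A path is a sequence of distinct vertices $u_1,\dots,u_k$ ($k\ge2$) with edges $u_t\to u_{t+1}$; a cycle is the same with $u_1=u_k$, $u_1,\dots,u_{k-1}$ distinct; $u_2,\dots,u_{k-1}$ are interior; $|\beta|=k$. A nonempty $S\subseteq V$ is a structural set ($S\in st(G)$) if $\ell(G)|_{\bar S}$ has no cycles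 and $\omega(e_{ii})\ne\lambda$ for $v_i\in\bar S$; $st_0(G)$ consists of those $S\in st(G)$ with $\omega(e_{ii})=0$ for all $v_i\in\bar S$. $\mathcal{B}_{ij}(G;S)$ is the set of paths or cycles from $v_i\in S$ to $v_j\in S$ with no interior vertex in $S$ (branches); $\mathcal{B}_S(G)$ is their union. $\mathcal{P}_\omega(u_1,\dots,u_k)=\omega(u_1u_2)\prod_{t=2}^{k-1}\frac{\omega(u_tu_{t+1})}{\lambda-\omega(u_tu_t)}$; $\mathcal{R}_S(G)$ is the graph on $S$ with an edge $v_i\to v_j$ iff $\mathcal{B}_{ij}(G;S)\ne\emptyset$, weight $\sum_{\beta\in\mathcal{B}_{ij}(G;S)}\mathcal{P}_\omega(\beta)$. Graphs $G,H$ are spectrally equivalent if $\mathcal{R}_S(G)=\mathcal{R}_T(H)$ for some $S\in st(G)$, $T\in st(H)$. If $G,H$ are spectrally equivalent with weight sets in $\mathbb{U}$, then $H$ is a reduction of $G$ over $\mathbb{U}$ if $|H|<|G|$ and an expansion of $G$ over $\mathbb{U}$ if $|H|\ge|G|$. $\mathcal{L}$-construction: for $S=\{v_1,\dots,v_m\}\in st_0(G)$ with every vertex of $G$ on a branch, for each $j$ choose a branch $\beta^j$ ending at $v_j$ of maximal length $|\beta^j|$ among branches in $\bigcup_i\mathcal{B}_{ij}(G;S)$. Build a graph $\tilde{\mathcal{X}}$ consisting of the vertices of $S$ together with, for each $j$, a separate new copy of the interior vertices of $\beta^j$ (pairwise disjoint for different $j$), forming a path $\beta^j_{\ell_j},\beta^j_{\ell_j-1},\dots,\beta^j_0$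 where $\ell_j=|\beta^j|-1$, $\beta^j_{\ell_j}\in S$ is the starting vertex of $\beta^j$ and $\beta^j_0=v_j$; give the edge $\beta^j_{\ell_j}\to\beta^j_{\ell_j-1}$ weight $\lambda^{|\beta^j|-2}\mathcal{P}_\omega(\beta^j)$ and all other edges of these paths weight $1$. Then, for each other branch $\gamma\in\mathcal{B}_{ij}(G;S)$, $\gamma\neq\beta^j$, add an edge from $v_i$ to $\beta^j_{|\gamma|-2}$ of weight $\lambda^{|\gamma|-2}\mathcal{P}_\omega(\gamma)$; parallel edges thus created are merged into one edge whose weight is the sum. The result is $\mathcal{L}_S(G)$; it has $m+\sum_{j}(|\beta^j|-2)$ vertices. *)

From HB Require Import structures.
From mathcomp Require Import all_boot all_order all_algebra.
From mathcomp Require Import complex.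
From mathcomp Require Import Rstruct.
From Stdlib Require Rdefinitions.

Set Implicit Arguments.
Unset Strict Implicit.
Unset Printing Implicit Defensive.

Import Order.TTheory GRing.Theory Num.Theory.
Local Open Scope ring_scope.

Notation C := (complex Rdefinitions.R).

Notation W := {fraction {poly C}}.

Definition polyW (p : {poly C}) : W := @FracField.tofrac _ p.

Definition lam : W := polyW 'X.

(* A weighted digraph on the finite vertex type V: G u v is the weight of the
   edge u -> v, and G u v = 0 means there is no edge u -> v (loops allowed,
   at most one edge per ordered pair). *)
Definition graph (V : finType) := V -> V -> W.

Section Graphs.
Variables (V : finType) (G : graph V).

Definition edge : rel V := fun u v => G u v != 0.
Definition edge_noloop : rel V := fun u v => (u != v) && (G u v != 0).

Definition is_pathb (e : rel V) (s : seq V) : bool :=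
  if s is x :: s' then (0 < size s')%N && uniq s && path e x s' else false.

Definition is_cycleb (e : rel V) (s : seq V) : bool :=
  if s is x :: s' then
    [&& (0 < size s')%N, last x s' == x, uniq s' & path e x s']
  else false.

Definition interior (s : seq V) : seq V := take (size s - 2) (behead s).

Definition restr_noloop (S : {set V}) : rel V :=
  fun u v => [&& edge_noloop u v, u \notin S & v \notin S].

Definition structural (S : {set V}) : Prop :=
  [/\ S != set0,
      (forall s, ~~ is_cycleb (restr_noloop S) s) &
      (forall v, v \notin S -> G v v != lam)].

Definition structural0 (S : {set V}) : Prop :=
  structural S /\ (forall v, v \notin S -> G v v = 0).

Definition branchb (S : {set V}) (i j : V) (s : seq V) : bool :=
  [&& is_pathb edge s || is_cycleb edge s,
      head i s == i, last i s == j, i \in S, j \in S &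
      all (fun v => v \notin S) (interior s)].

Fixpoint pw_tail (u : V) (s : seq V) : W :=
  if s is v :: s' then G u v / (lam - G u u) * pw_tail v s' else 1.

Definition pw (s : seq V) : W :=
  if s is u1 :: (u2 :: s') as s1 then G u1 u2 * pw_tail u2 s' else 0.

(* Every branch has at most #|V| + 1 vertices, so summing over all tuples of
   length < #|V| + 2 enumerates each branch exactly once. *)
Definition branch_sum (S : {set V}) (i j : V) (F : seq V -> W) : W :=
  \sum_(k < #|V|.+2) \sum_(t : k.-tuple V | branchb S i j t) F t.

Definition reduction_graph (S : {set V}) : graph {x : V | x \in S} :=
  fun a b => branch_sum S (val a) (val b) pw.

Definition charf : W :=
  \det ((\matrix_(a < #|V|, b < #|V|) G (enum_val a) (enum_val b))
        - lam%:M).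

End Graphs.
Arguments reduction_graph [V] G S _ _.

Definition lowest_numer (f : W) (p : {poly C}) : Prop :=
  exists q : {poly C}, [/\ q != 0, coprimep p q & f = polyW p / polyW q].

Definition same_nonzero_spectrum (V1 V2 : finType) (G1 : graph V1)
    (G2 : graph V2) : Prop :=
  exists p1 p2, [/\ lowest_numer (charf G1) p1, lowest_numer (charf G2) p2 &
    forall c : C, c != 0 -> mup c p1 = mup c p2].

Definition spec_equiv (V1 V2 : finType) (G1 : graph V1) (G2 : graph V2) : Prop :=
  exists (S : {set V1}) (T : {set V2}),
    [/\ structural G1 S, structural G2 T &
      exists f : {x : V1 | x \in S} -> {y : V2 | y \in T},
        bijective f /\
        forall a b : {x : V1 | x \in S}, reduction_graph G1 S a b = reduction_graph G2 T (f a) (f b)].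

Definition weights_in (U : {pred W}) (V : finType) (G : graph V) : Prop :=
  forall u v, G u v != 0 -> G u v \in U.

Definition is_reduction (U : {pred W}) (V1 V2 : finType) (G : graph V1)
  (H : graph V2) : Prop :=
  [/\ spec_equiv G H, weights_in U G, weights_in U H & (#|V2| < #|V1|)%N].

Definition is_expansion (U : {pred W}) (V1 V2 : finType) (G : graph V1)
  (H : graph V2) : Prop :=
  [/\ spec_equiv G H, weights_in U G, weights_in U H & (#|V1| <= #|V2|)%N].

Definition max_branch_to (V : finType) (G : graph V) (S : {set V}) (j : V)
    (b : seq V) : Prop :=
  (exists i, branchb G S i j b) /\
  (forall i s, branchb G S i j s -> (size s <= size b)%N).

(* The vertices of
   L_S(G) are the vertices of S (inl) together with, for each j, fresh copies
   beta^j_1, ..., beta^j_(l_j - 1) of the interior vertices of beta^j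
   (inr (j, t) stands for beta^j_(t+1)), where l_j = |beta^j| - 1. *)
Section LConstruction.
Variables (V : finType) (G : graph V) (S : {set V}).
Local Notation Sv := {x : V | x \in S}.
Variable beta : Sv -> seq V.

Definition Lvert := (Sv + {j : Sv & 'I_(size (beta j) - 2)})%type.

Definition Lpos (x : Lvert) : Sv * nat :=
  match x with
  | inl j => (j, 0%N)
  | inr p => (tag p, (nat_of_ord (tagged p)).+1)
  end.

(* Edge weights of L_S(G), after merging parallel edges:
   - beta^j_(t+1) -> beta^j_t has weight 1 (for the new vertices);
   - beta^j_(l_j) (the start of beta^j, in S) -> beta^j_(l_j - 1) has weight
     lambda^(|beta^j|-2) P(beta^j);
   - for every other branch gamma in B_ij(G;S), gamma <> beta^j, an edge
     v_i -> beta^j_(|gamma|-2) of weight lambda^(|gamma|-2) P(gamma). *)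
Definition Lgraph : graph Lvert :=
  fun x y =>
  let: (j, t) := Lpos y in
  match x with
  | inr p => if Lpos y == (tag p, nat_of_ord (tagged p)) then 1 else 0
  | inl i =>
      (if (head (val j) (beta j) == val i) && (t == size (beta j) - 2)%N
       then lam ^+ (size (beta j) - 2) * pw G (beta j) else 0)
      + branch_sum G S (val i) (val j)
          (fun g => if (g != beta j) && (size g - 2 == t)%N
                    then lam ^+ (size g - 2) * pw G g else 0)
  end.

End LConstruction.
Arguments Lvert [V] S beta.
Arguments Lgraph [V] G S beta _ _.

(* If H has no cycles and no loops outside S, the block of M(H) - lam I on the
   complement of S is -lam (1 - N) with N nilpotent.  A Schur complement then
   gives det (M(H) - lam I) = (-lam)^|~S| det (M(R_S(H)) - lam I), the geometric
   series inverting 1 - N expanding into the sum over branches.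
   The vertices of L_S(G) outside the copy of S form chains descending to it, so
   the same formula applies to L_S(G).  Walking down the chain of beta^j picks
   up, for each length t, the weights lam^(|gamma|-2) P(gamma) of the branches
   gamma into v_j with |gamma| = t + 2; dividing by lam^t gives back R_S(G).
   Hence both reductions coincide, the two characteristic functions differ by
   powers of -lam, and the nonzero spectra agree. *)

From HB Require Import structures.
From mathcomp Require Import all_boot all_order all_algebra.
From mathcomp Require Import complex Rstruct.
From mathcomp Require Import zify.
From mathcomp Require Import perm.

Set Implicit Arguments.
Unset Strict Implicit.
Unset Printing Implicit Defensive.

Import GRing.Theory.
Local Open Scope ring_scope.

(** * Rational functions *)

Lemma frac_repr (R : idomainType) (x : {fraction R}) :
  exists p q, q != 0 /\ x = FracField.tofrac p / FracField.tofrac q.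
Proof.
elim/quotW: x => r; have d0 := denom_ratioP r.
exists (frac r).1, (frac r).2; split => //.
rewrite !piE; apply/eqmodP => /=.
rewrite FracField.equivfE /= /FracField.mulf /FracField.invf.
by rewrite !numden_Ratio ?oner_eq0 ?mulf_neq0 ?oner_eq0 //= mulr1 mul1r mulrC.
Qed.

Lemma lowest_numer_exists (f : W) : exists p, lowest_numer f p.
Proof.
have [P [Q [Q0 ->]]] := frac_repr f; set g := gcdp P Q.
have gP : g %| P by rewrite dvdp_gcdl.
have gQ : g %| Q by rewrite dvdp_gcdr.
have gW : polyW g != 0 by rewrite tofrac_eq0 gcdp_eq0 negb_and Q0 orbT.
exists (P %/ g), (Q %/ g); split.
- by apply: contraNneq Q0 => e; rewrite -(divpK gQ) e mul0r.
- by apply: coprimep_div_gcd; rewrite Q0 orbT.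
- rewrite -{1}(divpK gP) -{1}(divpK gQ) !rmorphM /=.
  by rewrite invfM mulrACA divff // mulr1.
Qed.

Lemma coprimep_mup (R : fieldType) (p q : {poly R}) (c : R) :
  coprimep p q -> (mup c p == 0)%N || (mup c q == 0)%N.
Proof.
move=> cop; have [rp|nrp] := boolP (root p c); last by rewrite mupNroot.
by rewrite orbC mupNroot // (coprimep_root cop rp).
Qed.

Lemma mup_lowest_numer_eq (f1 f2 : W) p1 p2 u1 u2 (c : C) :
  lowest_numer f1 p1 -> lowest_numer f2 p2 ->
  f1 * polyW u1 = f2 * polyW u2 -> ~~ root u1 c -> ~~ root u2 c ->
  mup c p1 = mup c p2.
Proof.
move=> [q1 [q10 cop1 ->]] [q2 [q20 cop2 ->]] E ru1 ru2.
have u10 : u1 != 0 by apply: contraNneq ru1 => ->; rewrite root0.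
have u20 : u2 != 0 by apply: contraNneq ru2 => ->; rewrite root0.
have E' : p1 * u1 * q2 = p2 * u2 * q1.
  have divMK (x y q : W) : q != 0 -> x / q * y * q = x * y.
    by move=> q0; rewrite mulrAC divfK.
  apply/eqP; rewrite -tofrac_eq !rmorphM /=; apply/eqP; move: E; rewrite /polyW => E.
  rewrite -(divMK (FracField.tofrac p1) _ (FracField.tofrac q1)) ?tofrac_eq0 //.
  by rewrite E mulrAC divMK // tofrac_eq0.
have [p10|p10] := eqVneq p1 0.
  move/eqP: E'; rewrite p10 !mul0r eq_sym !mulf_eq0 (negbTE u20) (negbTE q10).
  by rewrite !orbF => /eqP ->.
have [p20|p20] := eqVneq p2 0.
  move/eqP: E'; rewrite p20 !mul0r !mulf_eq0 (negbTE u10) (negbTE q20).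
  by rewrite (negbTE p10).
move: (congr1 (mup c) E'); rewrite !mupM ?mulf_neq0 // (mupNroot ru1) (mupNroot ru2) !addn0.
by move: (coprimep_mup c cop1) (coprimep_mup c cop2) => /orP[]/eqP-> /orP[]/eqP->; lia.
Qed.

(** * Determinants *)

Lemma mulr_geometric_sum (R : pzRingType) (N : R) k :
  (\sum_(i < k) N ^+ i) * (1 - N) = 1 - N ^+ k.
Proof.
elim: k => [|k IH]; first by rewrite big_ord0 mul0r expr0 subrr.
by rewrite big_ord_recr /= mulrDl IH mulrBr mulr1 -exprSr addrA subrK.
Qed.

Section Determinants.
Variable R : comNzRingType.

Lemma det_reindex n (T : finType) (F : T -> T -> R) (e1 e2 : 'I_n -> T) :
  bijective e1 -> bijective e2 ->
  \det (\matrix_(a, b) F (e1 a) (e1 b)) = \det (\matrix_(a, b) F (e2 a) (e2 b)).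
Proof.
move=> [g1 e1K g1K] [g2 e2K g2K].
have inj_e : injective (g2 \o e1).
  by move=> x y /= /(congr1 e2); rewrite !g2K => /(congr1 g1); rewrite !e1K.
set s := perm inj_e.
have -> : \matrix_(a, b) F (e1 a) (e1 b) =
          row_perm s (col_perm s (\matrix_(a, b) F (e2 a) (e2 b))).
  by apply/matrixP => a b; rewrite !mxE !permE /= !g2K.
rewrite row_permE col_permE !det_mulmx !det_perm odd_permV.
by rewrite mulrCA -expr2 sqrr_sign mulr1.
Qed.

Definition det_fun (T : finType) (F : T -> T -> R) : R :=
  \det (\matrix_(a < #|T|, b < #|T|) F (enum_val a) (enum_val b)).

Lemma det_funE n (T : finType) (F : T -> T -> R) (e : 'I_n -> T) :
  bijective e -> \det (\matrix_(a, b) F (e a) (e b)) = det_fun F.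
Proof.
move=> be; have En : n = #|T| by rewrite -(bij_eq_card be) card_ord.
subst n; apply: det_reindex => //.
exact: (Bijective (@enum_valK T) (@enum_rankK T)).
Qed.

Lemma det_fun_bij (T1 T2 : finType) (F1 : T1 -> T1 -> R) (F2 : T2 -> T2 -> R)
    (f : T1 -> T2) :
  bijective f -> (forall a b, F1 a b = F2 (f a) (f b)) -> det_fun F1 = det_fun F2.
Proof.
move=> bf E; rewrite -(@det_funE #|T1| _ F2 (f \o enum_val)) /det_fun; last first.
  by apply: bij_comp => //; exact: (Bijective (@enum_valK T1) (@enum_rankK T1)).
by congr (\det _); apply/matrixP => a b; rewrite !mxE E.
Qed.

Lemma det_block_schur m r (A : 'M[R]_m) B C (D : 'M[R]_r) X :
  X *m D = 1%:M -> \det (block_mx A B C D) = \det (A - B *m X *m C) * \det D.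
Proof.
move=> XD.
have -> : block_mx A B C D =
    block_mx 1%:M (B *m X) 0 1%:M *m block_mx (A - B *m X *m C) 0 C D.
  rewrite mulmx_block !mul1mx !mul0mx ?mulmx0 !add0r ?addr0 -!mulmxA XD mulmx1.
  by rewrite subrK.
by rewrite det_mulmx det_ublock det_lblock !det1 !mul1r.
Qed.

Lemma mx_exprZ r (x : R) (M : 'M[R]_r) k : (x *: M) ^+ k = x ^+ k *: M ^+ k.
Proof.
elim: k => [|k IH]; first by rewrite !expr0 scale1r.
by rewrite !exprSr IH -!mulmxE -scalemxAl -scalemxAr scalerA.
Qed.

End Determinants.

Lemma det_1B_nilpotent (R : idomainType) r (N : 'M[R]_r) :
  N ^+ r = 0 -> \det (1 - N) = 1.
Proof.
(* det (1 - X N) is a unit polynomial, hence constant: compare it at 0 and 1. *)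
move=> Nr; pose P := \det (1 - 'X *: map_mx polyC N).
pose Q := \det (\sum_(i < r) ('X *: map_mx polyC N) ^+ i).
have QP : Q * P = 1.
  rewrite -det_mulmx mulmxE mulr_geometric_sum mx_exprZ -rmorphXn /= Nr.
  by rewrite map_mx0 scaler0 subr0 det1.
have : P \is a GRing.unit by apply/unitrPr; exists Q; rewrite mulrC.
rewrite poly_unitE => /andP[/eqP sP _].
have PC : P = (P`_0)%:P by apply: size1_polyC; rewrite sP.
have PE x : P.[x] = \det (1 - x *: N).
  rewrite /P -horner_evalE -det_map_mx map_mxB map_mx1 map_mxZ /= horner_evalE hornerX.
  by congr (\det (_ - _ *: _)); apply/matrixP => i j; rewrite !mxE /= horner_evalE hornerC.
have P0 := PE 0; have P1 := PE 1.
rewrite PC hornerC scale0r subr0 det1 in P0.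
by rewrite PC hornerC scale1r P0 in P1.
Qed.

(** * Sums over tuples and paths *)

Lemma big_tuple0 (R : nmodType) (T : finType) (F : seq T -> R) :
  \sum_(t : 0.-tuple T) F t = F [::].
Proof. by rewrite (big_pred1 [tuple]) // => t /=; apply/esym/eqP; exact: tuple0. Qed.

Lemma big_tuple_cons (R : nmodType) (T : finType) n (F : seq T -> R) :
  \sum_(t : n.+1.-tuple T) F t = \sum_x \sum_(t : n.-tuple T) F (x :: t).
Proof.
rewrite pair_big /= (reindex (fun p : T * n.-tuple T => [tuple of p.1 :: p.2])) //=.
exists (fun t : n.+1.-tuple T => (thead t, [tuple of behead t])).
  by move=> [x t] _; congr pair; apply: val_inj.
move=> t _; apply: val_inj => /=.
by case: t => [[|x s] //=] _; rewrite /thead (tnth_nth x).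
Qed.

Lemma big_tuple_rcons (R : nmodType) (T : finType) n (F : seq T -> R) :
  \sum_(t : n.+1.-tuple T) F t = \sum_(t : n.-tuple T) \sum_y F (rcons t y).
Proof.
elim: n F => [|n IH] F.
  rewrite big_tuple_cons (big_tuple0 (fun t => \sum_y F (rcons t y))).
  by apply: eq_bigr => x _; rewrite (big_tuple0 (fun t => F (x :: t))).
rewrite big_tuple_cons (big_tuple_cons n (fun t => \sum_y F (rcons t y))).
by apply: eq_bigr => x _; rewrite (IH (fun t => F (x :: t))).
Qed.

Lemma big_ord_trunc (R : nmodType) r n (F : nat -> R) :
  (r <= n)%N -> (forall k, (r <= k)%N -> F k = 0) ->
  \sum_(k < n) F k = \sum_(k < r) F k.
Proof.
move=> rn F0; rewrite (big_ord_widen n F rn) (bigID (fun k : 'I_n => (k < r)%N)) /=.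
by rewrite [X in _ + X]big1 ?addr0 // => k; rewrite -leqNgt => /F0.
Qed.

Lemma acyclic_path_uniq (V : finType) (e : rel V) :
  (forall c, ~~ is_cycleb e c) -> forall x s, path e x s -> uniq (x :: s).
Proof.
move=> acyc x s; elim: s x => [//|y s IH] x pxys.
have /andP[_ pys] : e x y && path e y s := pxys.
have uys := IH y pys; rewrite cons_uniq uys andbT; apply/negP => xys.
move: uys pxys; case/splitPr: xys => p q uniq_pxq path_pxq.
apply: (negP (acyc (x :: rcons p x))); rewrite /= size_rcons last_rcons eqxx.
move: uniq_pxq; rewrite cat_uniq /= negb_or => /and3P[up /andP[xp _] _].
move: path_pxq; rewrite cat_path /= => /and3P[pp exl _].
by rewrite rcons_uniq xp up rcons_path pp exl.
Qed.

(** * The reduction as a Schur complement *)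

Lemma lam_neq0 : lam != 0.
Proof. by rewrite tofrac_eq0 polyX_eq0. Qed.

Lemma interior_rcons (V : finType) (x : V) m y : interior (x :: rcons m y) = m.
Proof. by rewrite /interior /= size_rcons !subSS subn0 -cats1 take_size_cat. Qed.

Section Reduction.
Variables (V : finType) (H : graph V) (S : {set V}).
Hypothesis acyclic_out : forall s, ~~ is_cycleb (restr_noloop H S) s.
Hypothesis loop_out : forall v, v \notin S -> H v v = 0.

Local Notation out := (fun v => v \notin S).
Local Notation restr := (restr_noloop H S).

Fixpoint path_weight (u : V) (s : seq V) : W :=
  if s is v :: s' then H u v * path_weight v s' else 1.

(* The entries of the k-th power of the block of M(H) on ~: S. *)
Fixpoint walk_out k u v : W :=
  if k is k'.+1 then \sum_(w | w \notin S) H u w * walk_out k' w v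
  else (u == v)%:R.

Definition branch_weight p u j : W :=
  \sum_(m : p.-tuple V) if all out m then path_weight u (rcons m j) else 0.

Lemma restr_path_size x s :
  path restr x s -> s != [::] -> (size s < #|~: S|)%N.
Proof.
move=> pxs s0; rewrite -[(size s).+1]/(size (x :: s)) cardE.
apply: uniq_leq_size; first exact: acyclic_path_uniq pxs.
move=> y; rewrite mem_enum in_setC.
elim: s x pxs s0 => [//|z s IH] x /= /andP[/and3P[_ xS zS] pzs] _.
rewrite in_cons => /orP[/eqP -> //|]; case: s IH pzs => [|t s] IH pzs.
  by rewrite mem_seq1 => /eqP ->.
exact: IH.
Qed.

Lemma walk_out_path k u v : u \notin S -> walk_out k u v != 0 ->
  exists s, [/\ size s = k, path restr u s & last u s = v].
Proof.
elim: k u => [|k IH] u uS /=.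
  by case: (eqVneq u v) => [->|]; [exists [::] | rewrite eqxx].
move=> ne; have [w /andP[wS nz]] : exists w, (w \notin S) && (H u w * walk_out k w v != 0).
  apply/existsP; apply: contraNT ne => /existsPn nz; apply/eqP/big1 => w wS.
  by move: (nz w); rewrite wS /= negbK => /eqP.
move: nz; rewrite mulf_eq0 negb_or => /andP[huw nz].
have [s [<- ps <-]] := IH w wS nz; exists (w :: s); split => //=.
rewrite ps andbT /restr_noloop /edge_noloop huw uS wS !andbT.
by apply: contraNneq huw => <-; rewrite loop_out.
Qed.

Lemma walk_out_nilpotent k u v :
  u \notin S -> (#|~: S| <= k)%N -> walk_out k u v = 0.
Proof.
move=> uS Sk; apply/eqP; apply: contraT => nz.
have [s [sk ps _]] := walk_out_path uS nz.
case: s sk ps => [|y s] sk ps.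
  by move: Sk; rewrite -sk leqn0 => /eqP/cards0_eq/setP/(_ u); rewrite !inE uS.
by have := restr_path_size ps isT; rewrite sk ltnNge Sk.
Qed.

Lemma branch_weight0 u j : branch_weight 0 u j = H u j.
Proof.
pose F m := if all out m then path_weight u (rcons m j) else 0.
by rewrite /branch_weight (big_tuple0 F) /F /= mulr1.
Qed.

Lemma branch_weightS p u j :
  branch_weight p.+1 u j = \sum_(x | x \notin S) H u x * branch_weight p x j.
Proof.
pose F m := if all out m then path_weight u (rcons m j) else 0.
rewrite /branch_weight (big_tuple_cons p F) /F.
rewrite [RHS]big_mkcond; apply: eq_bigr => x _ /=.
case: ifP => xS /=; last by rewrite big1.
by rewrite mulr_sumr; apply: eq_bigr => m _; case: ifP => _; rewrite ?mulr0.
Qed.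

Lemma branch_weightE k u j : u \notin S ->
  branch_weight k u j = \sum_(w | w \notin S) walk_out k u w * H w j.
Proof.
elim: k u => [|k IH] u uS.
  rewrite branch_weight0 (bigD1 u) //= eqxx mul1r big1 ?addr0 // => w /andP[_ wu].
  by rewrite eq_sym (negbTE wu) mul0r.
rewrite branch_weightS /=.
under eq_bigr => x xS do rewrite IH // mulr_sumr.
rewrite exchange_big /=; apply: eq_bigr => w _.
by rewrite mulr_suml /=; apply: eq_bigr => x _; rewrite mulrA.
Qed.

Lemma branch_weight_nilpotent k i j :
  (#|~: S| <= k)%N -> branch_weight k.+1 i j = 0.
Proof.
move=> Sk; rewrite branch_weightS big1 // => u uS.
by rewrite branch_weightE // big1 ?mulr0 // => w _; rewrite walk_out_nilpotent ?mul0r.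
Qed.

Lemma pw_path_weight i m j : all out m ->
  pw H (i :: rcons m j) = path_weight i (rcons m j) / lam ^+ size m.
Proof.
have pw_tailE u s : all out (u :: s) ->
    pw_tail H u (rcons s j) = path_weight u (rcons s j) / lam ^+ (size s).+1.
  elim: s u => [|x s IH] u /= /andP[uS al].
    by rewrite loop_out // subr0 !mulr1 expr1.
  rewrite loop_out // subr0 IH // !exprS !invfM !mulrA.
  by rewrite [H u x / lam * _]mulrAC.
case: m => [|x m] al /=; first by rewrite expr0 invr1 !mulr1.
by rewrite pw_tailE // mulrA.
Qed.

Lemma path_weight_nonpath u s : ~~ path (edge H) u s -> path_weight u s = 0.
Proof.
elim: s u => [//|v s IH] u /=; rewrite negb_and => /orP[|/IH -> ]; last by rewrite mulr0.
by rewrite /edge negbK => /eqP ->; rewrite mul0r.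
Qed.

Lemma path_edge_restr x m :
  all out (x :: m) -> path (edge H) x m -> path restr x m.
Proof.
elim: m x => [//|y m IH] x /= /and3P[xS yS al] /andP[e pm].
have {}e : H x y != 0 := e.
rewrite IH ?andbT /= ?yS //; rewrite /restr_noloop /edge_noloop xS yS e !andbT.
by apply: contraNneq e => <-; rewrite loop_out.
Qed.

(* Once the endpoints are fixed in S and the interior outside S, a tuple with
   nonzero weight is automatically a path or a cycle: acyclicity outside S
   makes its interior duplicate-free. *)
Lemma branchb_pw i j x m y : i \in S -> j \in S ->
  (if branchb H S i j (x :: rcons m y) then pw H (x :: rcons m y) else 0) =
  (if (x == i) && (y == j) && all out m then pw H (i :: rcons m j) else 0).
Proof.
move=> Si Sj.
rewrite /branchb interior_rcons [head _ _]/= [last _ _]/= last_rcons Si Sj.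
have [->|xi] := eqVneq x i; last by rewrite !(andFb, andbF).
have [->|yj] := eqVneq y j; last by rewrite !(andTb, andFb, andbF).
rewrite !andTb; have [al|] := boolP (all out m); last by rewrite andbF.
rewrite andbT; have [pe|npe] := boolP (path (edge H) i (rcons m j)); last first.
  by case: ifP => // _; rewrite pw_path_weight // path_weight_nonpath // mul0r.
have um : uniq m.
  case: m al pe => [//|x1 m] /= /andP[x1S al] /andP[_ pe].
  apply: (acyclic_path_uniq acyclic_out); apply: path_edge_restr; rewrite /= ?x1S //.
  by move: pe; rewrite rcons_path => /andP[].
have iNm : i \notin m by apply: contraL Si => /(allP al).
have jNm : j \notin m by apply: contraL Sj => /(allP al).
suff -> : is_pathb (edge H) (i :: rcons m j) || is_cycleb (edge H) (i :: rcons m j) by [].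
rewrite /is_pathb /is_cycleb size_rcons last_rcons /= pe !andbT rcons_uniq um jNm.
by rewrite mem_rcons in_cons negb_or iNm andbT; case: eqVneq.
Qed.

Lemma branch_sum_tuple i j p : i \in S -> j \in S ->
  \sum_(t : p.+2.-tuple V | branchb H S i j t) pw H t = branch_weight p i j / lam ^+ p.
Proof.
move=> Si Sj; pose F t := if branchb H S i j t then pw H t else 0.
rewrite big_mkcond (big_tuple_cons p.+1 F).
under eq_bigr => x _ do rewrite (big_tuple_rcons p (fun t => F (x :: t))).
under eq_bigr => x _ do
  under eq_bigr => m _ do under eq_bigr => y _ do rewrite /F branchb_pw //.
rewrite (big_only1 i) // => [|x /negbTE xi _]; last first.
  by apply: big1 => m _; apply: big1 => y _; rewrite xi.
rewrite /branch_weight mulr_suml; apply: eq_bigr => m _.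
rewrite (big_only1 j) // => [|y /negbTE yj _]; last by rewrite yj andbF.
rewrite !eqxx !andTb; case: ifP => al; last by rewrite mul0r.
by rewrite pw_path_weight // size_tuple.
Qed.

Lemma branch_sum_pw_weights i j : i \in S -> j \in S ->
  branch_sum H S i j (pw H) = \sum_(p < #|V|) branch_weight p i j / lam ^+ p.
Proof.
move=> Si Sj; pose F t := if branchb H S i j t then pw H t else 0.
rewrite /branch_sum big_ord_recl big_ord_recl /= big_mkcond (big_tuple0 F) /=.
rewrite big_mkcond (big_tuple_cons 0 F) big1 => [|x _]; last first.
  by rewrite (big_tuple0 (fun t => F (x :: t))).
by rewrite !add0r; apply: eq_bigr => p _; exact: branch_sum_tuple.
Qed.

Lemma branch_sum_pwE i j K : i \in S -> j \in S -> (#|~: S| <= K)%N ->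
  branch_sum H S i j (pw H) = H i j + \sum_(k < K) branch_weight k.+1 i j / lam ^+ k.+1.
Proof.
move=> Si Sj SK; have V0 : (0 < #|V|)%N by apply/card_gt0P; exists i.
rewrite branch_sum_pw_weights // -(prednK V0) big_ord_recl /=.
rewrite branch_weight0 expr0 divr1; congr (_ + _).
have SV : (#|~: S| <= #|V|.-1)%N.
  have S0 : (0 < #|S|)%N by apply/card_gt0P; exists i.
  by have := cardsC S; lia.
have Fnil k : (#|~: S| <= k)%N -> branch_weight k.+1 i j / lam ^+ k.+1 = 0.
  by move=> Sk; rewrite branch_weight_nilpotent // mul0r.
by rewrite (big_ord_trunc SV Fnil) -(big_ord_trunc SK Fnil).
Qed.

Local Notation SS := {x : V | x \in S}.
Local Notation SC := {x : V | x \in ~: S}.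
Local Notation m := #|{: SS}|.
Local Notation r := #|{: SC}|.

Definition vert_in (a : 'I_m) : V := val (enum_val a).
Definition vert_out (c : 'I_r) : V := val (enum_val c).

Lemma vert_inP a : vert_in a \in S.
Proof. exact: valP (enum_val a). Qed.

Lemma vert_outP c : vert_out c \notin S.
Proof. by rewrite -in_setC; exact: valP (enum_val c). Qed.

Lemma eq_vert_in a b : (vert_in a == vert_in b) = (a == b).
Proof. by rewrite (inj_eq val_inj) (inj_eq enum_val_inj). Qed.

Lemma eq_vert_out c d : (vert_out c == vert_out d) = (c == d).
Proof. by rewrite (inj_eq val_inj) (inj_eq enum_val_inj). Qed.

Lemma sum_vert_out (f : V -> W) :
  \sum_(c < r) f (vert_out c) = \sum_(w | w \notin S) f w.
Proof.
rewrite -(big_enum_val (A := predT) (fun x : SC => f (val x))) -(big_sub (~: S) f).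
by apply: eq_bigl => w; rewrite in_setC.
Qed.

Definition vert_split (a : 'I_(m + r)) : V :=
  match split a with inl b => vert_in b | inr c => vert_out c end.

Lemma vert_split_bij : bijective vert_split.
Proof.
apply: inj_card_bij; last first.
  rewrite card_ord !card_sig -(cardsC S).
  by apply: leq_add; apply: subset_leq_card; apply/subsetP => x; rewrite !inE.
move=> a b; rewrite /vert_split -[a]splitK -[b]splitK.
case: (split a) => a'; case: (split b) => b'; rewrite !unsplitK.
- by move/eqP; rewrite eq_vert_in => /eqP ->.
- by move=> e; have := vert_inP a'; rewrite e (negbTE (vert_outP b')).
- by move=> e; have := vert_inP b'; rewrite -e (negbTE (vert_outP a')).
- by move/eqP; rewrite eq_vert_out => /eqP ->.
Qed.

Definition char_entry (u v : V) : W := H u v - (u == v)%:R * lam.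

Lemma charf_det_fun : charf H = det_fun char_entry.
Proof.
rewrite /charf /det_fun; congr (\det _); apply/matrixP => a b.
by rewrite !mxE /char_entry (inj_eq enum_val_inj) mulr_natl.
Qed.

Definition mx_out : 'M[W]_r := \matrix_(c, d) H (vert_out c) (vert_out d).

Lemma mx_out_exp k c d : (mx_out ^+ k) c d = walk_out k (vert_out c) (vert_out d).
Proof.
elim: k c d => [|k IH] c d; first by rewrite expr0 !mxE /= eq_vert_out.
pose f w := H (vert_out c) w * walk_out k w (vert_out d).
rewrite exprS -mulmxE mxE /= -(sum_vert_out f).
by apply: eq_bigr => e _; rewrite IH mxE.
Qed.

Lemma mx_out_nilpotent : mx_out ^+ r = 0.
Proof.
apply/matrixP => c d; rewrite mx_out_exp mxE walk_out_nilpotent ?vert_outP //.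
by rewrite card_sig; apply: subset_leq_card; apply/subsetP => x; rewrite !inE.
Qed.

Definition mx_in : 'M[W]_m := \matrix_(a, b) char_entry (vert_in a) (vert_in b).
Definition mx_in_out : 'M[W]_(m, r) := \matrix_(a, d) H (vert_in a) (vert_out d).
Definition mx_out_in : 'M[W]_(r, m) := \matrix_(c, b) H (vert_out c) (vert_in b).
Definition nil_out : 'M[W]_r := lam^-1 *: mx_out.
Definition inv_out : 'M[W]_r := (- lam^-1) *: \sum_(k < r) nil_out ^+ k.

Lemma char_blockE :
  \matrix_(a, b) char_entry (vert_split a) (vert_split b) =
  block_mx mx_in mx_in_out mx_out_in (mx_out - lam%:M).
Proof.
apply/matrixP => a b; rewrite mxE /vert_split -[a]splitK -[b]splitK.
case: (split a) => a'; case: (split b) => b'; rewrite !unsplitK /=.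
- by rewrite block_mxEul !mxE.
- rewrite block_mxEur !mxE /char_entry.
  suff /negbTE -> : vert_in a' != vert_out b' by rewrite mul0r subr0.
  by apply: contraNneq (vert_outP b') => <-; exact: vert_inP.
- rewrite block_mxEdl !mxE /char_entry.
  suff /negbTE -> : vert_out a' != vert_in b' by rewrite mul0r subr0.
  by apply: contraNneq (vert_outP a') => ->; exact: vert_inP.
- by rewrite block_mxEdr !mxE /char_entry eq_vert_out mulr_natl.
Qed.

Lemma mx_out_subE : mx_out - lam%:M = (- lam) *: (1 - nil_out).
Proof.
rewrite /nil_out scalerBr scalerA mulNr divff ?lam_neq0 // scaleN1r opprK.
by rewrite scaleNr scalemx1 addrC.
Qed.

Lemma inv_outK : inv_out *m (mx_out - lam%:M) = 1%:M.
Proof.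
rewrite mx_out_subE /inv_out -scalemxAl -scalemxAr scalerA mulrNN mulVf ?lam_neq0 //.
rewrite scale1r mulmxE mulr_geometric_sum /nil_out mx_exprZ mx_out_nilpotent.
by rewrite scaler0 subr0.
Qed.

Lemma det_out : \det (mx_out - lam%:M) = (- lam) ^+ r.
Proof.
rewrite mx_out_subE detZ det_1B_nilpotent ?mulr1 //.
by rewrite /nil_out mx_exprZ mx_out_nilpotent scaler0.
Qed.

Lemma schur_entry a b :
  (mx_in_out *m inv_out *m mx_out_in) a b =
  - \sum_(k < r) branch_weight k.+1 (vert_in a) (vert_in b) / lam ^+ k.+1.
Proof.
have walk_entry k : (mx_in_out *m mx_out ^+ k *m mx_out_in) a b =
    branch_weight k.+1 (vert_in a) (vert_in b).
  rewrite branch_weightS -sum_vert_out !mxE.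
  under eq_bigr => d _ do rewrite !mxE mulr_suml.
  rewrite exchange_big /=; apply: eq_bigr => c _.
  rewrite branch_weightE ?vert_outP // -sum_vert_out mulr_sumr.
  by apply: eq_bigr => d _; rewrite !mxE mx_out_exp mulrA.
rewrite /inv_out -scalemxAr mulmx_sumr -scalemxAl mulmx_suml mxE summxE.
rewrite mulr_sumr -sumrN; apply: eq_bigr => k _.
rewrite /nil_out mx_exprZ -scalemxAr -scalemxAl mxE walk_entry.
by rewrite exprVn exprS invfM mulNr mulrA mulrC.
Qed.

Lemma charf_reduction : charf H = (- lam) ^+ #|~: S| *
  det_fun (fun x y : SS => reduction_graph H S x y - (x == y)%:R * lam).
Proof.
have rS : r = #|~: S| by rewrite card_sig; apply: eq_card => x; rewrite !inE.
rewrite charf_det_fun -(det_funE char_entry vert_split_bij) char_blockE.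
rewrite (det_block_schur _ _ _ inv_outK) det_out -rS mulrC; congr (_ * _).
congr (\det _); apply/matrixP => a b.
have subE (M N : 'M[W]_m) : (M - N) a b = M a b - N a b by rewrite !mxE.
rewrite subE schur_entry opprK [mx_in a b]mxE mxE.
rewrite /reduction_graph (branch_sum_pwE _ _ (eq_leq (esym rS))) ?vert_inP //=.
by rewrite /char_entry (inj_eq enum_val_inj) -eq_vert_in addrAC.
Qed.

End Reduction.

(** * Branch sums and the L-construction *)

Section BranchSum.
Variables (V : finType) (G : graph V) (S : {set V}) (i j : V).

Lemma eq_branch_sum (F F' : seq V -> W) :
  (forall g, branchb G S i j g -> F g = F' g) ->
  branch_sum G S i j F = branch_sum G S i j F'.
Proof. by move=> FF'; apply: eq_bigr => k _; apply: eq_bigr => t /FF'. Qed.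

Lemma branch_sumD (F F' : seq V -> W) :
  branch_sum G S i j (fun g => F g + F' g) =
  branch_sum G S i j F + branch_sum G S i j F'.
Proof. by rewrite /branch_sum -big_split; apply: eq_bigr => k _; rewrite big_split. Qed.

Lemma branch_sumMl (F : seq V -> W) c :
  branch_sum G S i j F * c = branch_sum G S i j (fun g => F g * c).
Proof. by rewrite /branch_sum mulr_suml; apply: eq_bigr => k _; rewrite mulr_suml. Qed.

Lemma branch_sum_sum N (F : nat -> seq V -> W) :
  \sum_(t < N) branch_sum G S i j (F t) =
  branch_sum G S i j (fun g => \sum_(t < N) F t g).
Proof.
by rewrite /branch_sum exchange_big; apply: eq_bigr => k _; rewrite exchange_big.
Qed.

Lemma branch_size g : branchb G S i j g -> (2 <= size g < #|V|.+2)%N.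
Proof.
have size_uniq (s : seq V) : uniq s -> (size s <= #|V|)%N.
  by move=> us; rewrite -(card_uniqP us) max_card.
case/andP; case: g => [|x s] //.
by case/orP=> [/andP[/andP[s0 /size_uniq]] | /and4P[s0 _ /size_uniq]] /=; lia.
Qed.

Lemma branch_sum_pred1 (s : seq V) (F : seq V -> W) : (size s < #|V|.+2)%N ->
  branch_sum G S i j (fun g => if g == s then F g else 0) =
  if branchb G S i j s then F s else 0.
Proof.
move=> hs; rewrite /branch_sum (big_only1 (Ordinal hs)) //= => [|k ks _]; last first.
  apply: big1 => t _; case: eqP => // ts; case/eqP: ks.
  by apply: val_inj; rewrite /= -ts size_tuple.
rewrite big_mkcond (big_only1 (in_tuple s)) //= => [|t ts _]; first by rewrite eqxx.
by case: ifP => // _; case: eqP => // e; case/eqP: ts; apply: val_inj.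
Qed.

End BranchSum.

Section LConstruction.
Variables (V : finType) (G : graph V) (S : {set V}).
Local Notation Sv := {x : V | x \in S}.
Variable beta : Sv -> seq V.

Local Notation n j := (size (beta j) - 2)%N.
Local Notation Lv := (Lvert S beta).
Local Notation L := (Lgraph G S beta).
Local Notation chain := {j : Sv & 'I_(size (beta j) - 2)}.

Definition Lbase : {set Lv} := [set x | if x is inl _ then true else false].

(* The weight of the edge of L from v_i to beta^j_t (to v_j itself if t = 0). *)
Definition Lweight (i j : Sv) (t : nat) : W :=
  (if (head (val j) (beta j) == val i) && (t == n j)
   then lam ^+ n j * pw G (beta j) else 0)
  + branch_sum G S (val i) (val j)
      (fun g => if (g != beta j) && (size g - 2 == t)%N
                then lam ^+ (size g - 2) * pw G g else 0).

Lemma Lgraph_base i j : L (inl i) (inl j) = Lweight i j 0.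
Proof. by []. Qed.

Lemma Lgraph_base_chain i q : L (inl i) (inr q) = Lweight i (tag q) (val (tagged q)).+1.
Proof. by []. Qed.

Lemma Lgraph_chain_base p j :
  L (inr p) (inl j) = ((j == tag p) && (0 == val (tagged p)))%:R.
Proof. by rewrite /Lgraph /= xpair_eqE; case: ifP. Qed.

Lemma Lgraph_chain p q :
  L (inr p) (inr q) = ((tag q == tag p) && ((val (tagged q)).+1 == val (tagged p)))%:R.
Proof. by rewrite /Lgraph /= xpair_eqE; case: ifP. Qed.

Lemma sum_chain (F : Sv -> nat -> W) j k :
  \sum_(q : chain) (if (tag q == j) && (val (tagged q) == k)
                    then F (tag q) (val (tagged q)) else 0)
  = if (k < n j)%N then F j k else 0.
Proof.
case: ltnP => kn.
  rewrite (big_only1 (Tagged (fun j => 'I_(n j)) (Ordinal kn))) //= ?eqxx //.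
  move=> [j' k'] /= + _; case: ifP => // /andP[/eqP ej /eqP ek]; subst j'.
  by rewrite ek; case/eqP; congr Tagged; apply: val_inj.
rewrite big1 // => -[j' k'] _ /=; case: ifP => // /andP[/eqP ej /eqP ek]; subst j'.
by move: (ltn_ord k'); rewrite ek ltnNge kn.
Qed.

Lemma sum_off_Lbase (F : Lv -> W) :
  \sum_(x | x \notin Lbase) F x = \sum_(q : chain) F (inr q).
Proof.
rewrite big_sumType /= big_pred0 ?add0r => [|i]; last by rewrite inE.
by apply: eq_bigl => q; rewrite inE.
Qed.

(* Off the base, L is a disjoint union of chains leading down to it: the only
   walk from beta^j_(t+1) back to the base ends at v_j and has t interior
   vertices. *)
Lemma branch_weight_chain k p j : branch_weight L Lbase k (inr p) (inl j) =
  ((tag p == j) && (val (tagged p) == k))%:R.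
Proof.
elim: k p => [|k IH] p.
  by rewrite branch_weight0 Lgraph_chain_base eq_sym [0%N == _]eq_sym.
rewrite branch_weightS sum_off_Lbase.
transitivity (\sum_(q : chain) if (tag q == j) && (val (tagged q) == k)
    then ((tag p == j) && (val (tagged p) == k.+1))%:R else 0 : W).
  apply: eq_bigr => q _; rewrite IH Lgraph_chain.
  case: ifP => [/andP[/eqP ej /eqP ek]|_]; last by rewrite mulr0.
  have -> : (tag q == tag p) = (j == tag p) by rewrite ej.
  by rewrite ek mulr1 eq_sym [k.+1 == _]eq_sym.
rewrite (sum_chain (fun _ _ => ((tag p == j) && (val (tagged p) == k.+1))%:R)).
case: ltnP => // kn; case: eqP => //= ej; case: eqP => //= ek.
by move: (ltn_ord (tagged p)); rewrite ek ej ltnNge (leq_trans kn).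
Qed.

Lemma branch_weight_Lbase k i j : branch_weight L Lbase k.+1 (inl i) (inl j) =
  if (k < n j)%N then Lweight i j k.+1 else 0.
Proof.
rewrite branch_weightS sum_off_Lbase -(sum_chain (fun j k => Lweight i j k.+1)).
apply: eq_bigr => q _; rewrite branch_weight_chain Lgraph_base_chain.
by case: ifP => _; rewrite ?mulr1 ?mulr0.
Qed.

Lemma Lgraph_loop x : x \notin Lbase -> L x x = 0.
Proof.
case: x => [i|p]; first by rewrite inE.
by rewrite Lgraph_chain eqxx /= (gtn_eqF (ltnSn _)).
Qed.

Definition chain_height (x : Lv) : nat := if x is inr p then (val (tagged p)).+1 else 0.

Lemma chain_height_restr x y :
  restr_noloop L Lbase x y -> (chain_height y < chain_height x)%N.
Proof.
case/and3P => /andP[_ e]; case: x e => [i|p] e; rewrite ?inE //.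
case: y e => [j|q] e; rewrite ?inE //= => _ _.
move: e; rewrite Lgraph_chain; case: (tag q == tag p); last by rewrite eqxx.
by case: (altP (_.+1 =P _)) => [<- //|]; rewrite eqxx.
Qed.

Lemma Lgraph_acyclic s : ~~ is_cycleb (restr_noloop L Lbase) s.
Proof.
have height_path x t : path (restr_noloop L Lbase) x t -> t != [::] ->
    (chain_height (last x t) < chain_height x)%N.
  elim: t x => [//|y t IH] x /= /andP[e pt] _.
  apply: leq_ltn_trans (chain_height_restr e).
  by case: t IH pt => [|z t] IH pt; [exact: leqnn | exact: ltnW (IH y pt isT)].
case: s => [//|x s] /=; apply/negP => /and4P[s0 /eqP lx _ ps].
have s_nil : s != [::] by case: s s0 {lx ps}.
by move: (height_path x s ps s_nil); rewrite lx ltnn.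
Qed.

Lemma sum_Lweight i j : max_branch_to G S (val j) (beta j) ->
  \sum_(t < (n j).+1) Lweight i j t / lam ^+ t = branch_sum G S (val i) (val j) (pw G).
Proof.
move=> [[i0 bi0] bmax]; have /andP[_ sb] := branch_size bi0.
have bi : branchb G S (val i) (val j) (beta j) = (head (val j) (beta j) == val i).
  move: bi0; rewrite /branchb; case: (beta j) => [|x s] //=.
  by case/and5P => -> _ -> _ /andP[-> ->]; rewrite (valP i) /= andbT.
have lamX t : lam ^+ t != 0 by rewrite expf_neq0 ?lam_neq0.
pose other t g := if (g != beta j) && (size g - 2 == t)%N then pw G g else 0.
have LweightE t : Lweight i j t / lam ^+ t =
    (if (head (val j) (beta j) == val i) && (t == n j :> nat) then pw G (beta j) else 0)
    + branch_sum G S (val i) (val j) (other t).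
  rewrite /Lweight mulrDl branch_sumMl; congr (_ + _).
    by case: ifP => [/andP[_ /eqP ->]|_]; rewrite ?mul0r // mulrC mulKf ?lamX.
  apply: eq_branch_sum => g _; rewrite /other.
  by case: ifP => [/andP[_ /eqP ->]|_]; rewrite ?mul0r // mulrC mulKf ?lamX.
under eq_bigr => t _ do rewrite LweightE.
rewrite big_split /= (@branch_sum_sum _ G S (val i) (val j) (n j).+1 other).
rewrite (big_only1 ord_max) //= => [|t tn _]; last first.
  by rewrite andbC; case: eqP => // tnj; case/eqP: tn; apply: val_inj.
have sum_other g : branchb G S (val i) (val j) g ->
    \sum_(t < (n j).+1) other t g = if g != beta j then pw G g else 0.
  move=> bg; rewrite /other; case: (g =P beta j) => [_|/eqP gb] /=; first by rewrite big1.
  have gn : (size g - 2 < (n j).+1)%N by rewrite ltnS leq_sub2r // (bmax _ _ bg).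
  rewrite (big_only1 (Ordinal gn)) //= ?eqxx // => t tg _.
  by case: eqP => // e; case/eqP: tg; apply: val_inj; rewrite /= e.
rewrite eqxx andbT (eq_branch_sum sum_other) -bi -(branch_sum_pred1 G S _ _ (pw G) sb).
by rewrite -branch_sumD; apply: eq_branch_sum => g _; case: eqP; rewrite ?addr0 ?add0r.
Qed.

Lemma inl_Lbase (i : Sv) : (inl i : Lv) \in Lbase.
Proof. by rewrite inE. Qed.

Lemma Lbase_structural : S != set0 -> structural L Lbase.
Proof.
move=> /set0Pn[x xS]; split; [|exact: Lgraph_acyclic|].
- by apply/set0Pn; exists (inl (exist _ x xS)); exact: inl_Lbase.
- by move=> v /Lgraph_loop ->; rewrite eq_sym lam_neq0.
Qed.

Definition Lbase_vert (i : Sv) : {x : Lv | x \in Lbase} := exist _ (inl i) (inl_Lbase i).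

Lemma reduction_Lgraph i j : max_branch_to G S (val j) (beta j) ->
  reduction_graph L Lbase (Lbase_vert i) (Lbase_vert j) = reduction_graph G S i j.
Proof.
move=> bj; rewrite /reduction_graph /= -(sum_Lweight i bj) big_ord_recl /= expr0 divr1.
rewrite (branch_sum_pwE Lgraph_acyclic Lgraph_loop _ _ (leq_addr (n j) _)) ?inl_Lbase //.
rewrite Lgraph_base; congr (_ + _).
have chain_end k : (n j <= k)%N ->
    branch_weight L Lbase k.+1 (inl i) (inl j) / lam ^+ k.+1 = 0.
  by move=> jk; rewrite branch_weight_Lbase ltnNge jk mul0r.
rewrite (big_ord_trunc (leq_addl _ _) chain_end).
by apply: eq_bigr => k _; rewrite branch_weight_Lbase ltn_ord.
Qed.

Lemma Lbase_vert_bij : bijective Lbase_vert.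
Proof.
apply: inj_card_bij => [a b [] //|].
rewrite card_sig (eq_card (B := [set (inl x : Lv) | x : Sv])) => [|[x|p]].
- by rewrite card_imset // => a b [].
- by rewrite !inE (imset_f (fun x => inl x : Lv)).
- by rewrite inE; apply/esym/negbTE/imsetP => -[].
Qed.

Lemma card_Lvert : #|{: Lv}| = (#|S| + \sum_(j : Sv) n j)%N.
Proof.
rewrite card_sum card_sig card_tagged sumnE big_map big_enum /=.
by congr addn; apply: eq_bigr => j _; exact: card_ord.
Qed.

Section Weights.
Variable U : {pred W}.
Hypothesis U_subring : GRing.subring_closed U.
HB.instance Definition _ := GRing.isSubringClosed.Build W U U_subring.

Hypothesis G_weights : weights_in U G.
Hypothesis loop_out : forall v, v \notin S -> G v v = 0.

Lemma path_weight_in u s : path_weight G u s \in U.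
Proof.
elim: s u => [|v s IH] u /=; first exact: rpred1.
apply: rpredM (IH v); have [->|/G_weights //] := eqVneq (G u v) 0; exact: rpred0.
Qed.

(* The factor lam^(|g|-2) clears the denominators of pw G g. *)
Lemma branch_term_in i j g : branchb G S i j g -> lam ^+ (size g - 2) * pw G g \in U.
Proof.
move=> bg; have /andP[s2 _] := branch_size bg.
case: g bg s2 => [|x s] // bg s2; case/lastP: s bg s2 => [|m y] // bg s2.
have al : all (fun v => v \notin S) m.
  by case/and5P: bg => _ _ _ _ /andP[_]; rewrite interior_rcons.
rewrite (pw_path_weight loop_out) // [size _]/= size_rcons !subSS subn0 mulrCA.
by rewrite divff ?expf_neq0 ?lam_neq0 // mulr1 path_weight_in.
Qed.

Hypothesis beta_max : forall j, max_branch_to G S (val j) (beta j).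

Lemma Lweight_in i j t : Lweight i j t \in U.
Proof.
rewrite rpredD //.
  by case: ifP => _; [have [[i0 /branch_term_in]] := beta_max j | exact: rpred0].
rewrite rpred_sum // => k _; rewrite rpred_sum // => g /branch_term_in.
by case: ifP => _ //; rewrite rpred0.
Qed.

Lemma Lgraph_weights : weights_in U L.
Proof.
move=> [i|p] [j|q] _.
- by rewrite Lgraph_base Lweight_in.
- by rewrite Lgraph_base_chain Lweight_in.
- by rewrite Lgraph_chain_base rpred_nat.
- by rewrite Lgraph_chain rpred_nat.
Qed.

End Weights.

End LConstruction.

Lemma reduction_iso_same_nonzero_spectrum (V1 V2 : finType)
    (G1 : graph V1) (G2 : graph V2) (S1 : {set V1}) (S2 : {set V2})
    (f : {x | x \in S1} -> {y | y \in S2}) :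
  (forall s, ~~ is_cycleb (restr_noloop G1 S1) s) ->
  (forall v, v \notin S1 -> G1 v v = 0) ->
  (forall s, ~~ is_cycleb (restr_noloop G2 S2) s) ->
  (forall v, v \notin S2 -> G2 v v = 0) ->
  bijective f ->
  (forall a b, reduction_graph G1 S1 a b = reduction_graph G2 S2 (f a) (f b)) ->
  same_nonzero_spectrum G1 G2.
Proof.
move=> acyc1 loop1 acyc2 loop2 bf Rf.
have det_red : det_fun (fun a b => reduction_graph G1 S1 a b - (a == b)%:R * lam) =
               det_fun (fun a b => reduction_graph G2 S2 a b - (a == b)%:R * lam).
  by apply: (det_fun_bij bf) => a b; rewrite Rf (bij_eq bf).
have [p1 l1] := lowest_numer_exists (charf G1).
have [p2 l2] := lowest_numer_exists (charf G2).
exists p1, p2; split => // c c0.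
have nroot k : ~~ root ((- 'X) ^+ k) c.
  by rewrite /root horner_exp hornerN hornerX expf_eq0 oppr_eq0 (negbTE c0) andbF.
apply: (mup_lowest_numer_eq l1 l2 _ (nroot #|~: S2|) (nroot #|~: S1|)).
rewrite (charf_reduction acyc1 loop1) (charf_reduction acyc2 loop2) det_red.
rewrite /polyW !rmorphXn !rmorphN /= -/(polyW 'X) -/lam mulrAC [RHS]mulrAC.
by congr (_ * _); exact: mulrC.
Qed.

Theorem theorem6 (V : finType) (G : graph V) (U : {pred W}) (S : {set V})
    (beta : {x : V | x \in S} -> seq V) :
  GRing.subring_closed U ->
  weights_in U G ->
  structural0 G S ->
  (forall v : V, exists (i j : V) (s : seq V), branchb G S i j s /\ v \in s) ->
  (forall j : {x : V | x \in S}, max_branch_to G S (val j) (beta j)) ->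
  [/\ spec_equiv G (Lgraph G S beta),
      same_nonzero_spectrum G (Lgraph G S beta),
      (#|S| + \sum_(j : {x : V | x \in S}) (size (beta j) - 2) < #|V|)%N ->
        is_reduction U G (Lgraph G S beta)
    & ~~ (#|S| + \sum_(j : {x : V | x \in S}) (size (beta j) - 2) < #|V|)%N ->
        is_expansion U G (Lgraph G S beta)].
Proof.
(* Covering V by branches only makes L_S(G) well defined in the paper; the
   encoding Lgraph does not need it. *)
move=> U_subring G_weights [G_struct loop0] _ beta_max.
have [S0 acyclic _] := G_struct.
have red_eq a b : reduction_graph G S a b =
    reduction_graph (Lgraph G S beta) (Lbase beta) (Lbase_vert beta a) (Lbase_vert beta b).
  by rewrite reduction_Lgraph.
have equiv : spec_equiv G (Lgraph G S beta).
  exists S, (Lbase beta); split => //; first exact: Lbase_structural S0.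
  by exists (Lbase_vert beta); split; [exact: Lbase_vert_bij|].
have L_weights := Lgraph_weights U_subring G_weights loop0 beta_max.
split => //.
- exact: (reduction_iso_same_nonzero_spectrum acyclic loop0 (@Lgraph_acyclic _ _ _ beta)
    (@Lgraph_loop _ _ _ beta) (@Lbase_vert_bij _ _ beta) red_eq).
- by move=> lt; split => //; rewrite card_Lvert.
- by rewrite -leqNgt => ge; split => //; rewrite card_Lvert.
Qed.
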